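(* Let $G$ be a vertex-weighted complex digraph (as defined in the context). Then the underlying undirected graph of $G$ is connected if and only if the algebraic multiplicity of the eigenvalue $0$ of the combinatorial Laplacian $L(G)$ is exactly $1$.
   Context: A vertex-weighted complex digraph is $G=(V,E)$ with $V=\{1,\dots,n\}$, $E\subseteq\{(i,j)\in V\times V:i\neq j\}$ such that for $i\neq j$ at most one of $(i,j),(j,i)$ lies in $E$, together with nonzero complex vertex weights $w_1,\dots,w_n\in\mathbb C\setminus\{0\}$; for each $i$ fix a square root $s_i$ with $s_i^2=w_i$. Vertices $i\neq j$ are adjacent iff $(i,j)\in E$ or $(j,i)\in E$. The adjacency matrix $A(G)$ has $A_{ij}=\overline{s_i}\,s_j$ if $i,j$ are adjacent and $A_{ij}=0$ otherwise. The degree of vertex $i$ is $d_i=\sum_{j \text{ adjacent to } i}|w_j|$, $D(G)=\mathrm{diag}(d_1,\dots,d_n)$, the combinatorial Laplacian is $L(G)=D(G)-A(G)$ and the signless Laplacian is $Q(G)=D(G)+A(G)$; both are Hermitian positive semidefinite. Connectivity, connected components and cycles refer to the underlying undirected graph. *)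

From HB Require Import structures.
From mathcomp Require Import all_boot all_order all_algebra.
Set Implicit Arguments. Unset Strict Implicit. Unset Printing Implicit Defensive.
Import Order.TTheory GRing.Theory Num.Theory.
Local Open Scope ring_scope.

(* Vertex-weighted complex digraph on vertex set 'I_n (= {1..n} shifted to
   {0..n-1}); E : rel 'I_n is the arc set, w the weights, s the chosen
   square roots. The complex field is modelled by an arbitrary
   numClosedFieldType C (e.g. algC). *)

Definition digraph_ok n (E : rel 'I_n) : Prop :=
  forall i j : 'I_n, E i j -> (i != j) && ~~ E j i.

Definition adj n (E : rel 'I_n) : rel 'I_n := fun i j => (i != j) && (E i j || E j i).

Definition ugraph_connected n (E : rel 'I_n) : Prop :=
  forall i j : 'I_n, connect (adj E) i j.

Definition adjmx (C : numClosedFieldType) n (E : rel 'I_n) (s : 'I_n -> C)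
  : 'M[C]_n :=
  \matrix_(i, j) (if adj E i j then (s i)^* * s j else 0).

Definition degree (C : numClosedFieldType) n (E : rel 'I_n) (w : 'I_n -> C)
  (i : 'I_n) : C :=
  \sum_(j | adj E i j) `|w j|.

Definition degmx (C : numClosedFieldType) n (E : rel 'I_n) (w : 'I_n -> C)
  : 'M[C]_n :=
  diag_mx (\row_i degree E w i).

Definition laplacian (C : numClosedFieldType) n (E : rel 'I_n)
  (w s : 'I_n -> C) : 'M[C]_n :=
  degmx E w - adjmx E s.

Definition alg_mult (C : numClosedFieldType) n (M : 'M[C]_n) (a : C) : nat :=
  mup a (char_poly M).

From HB Require Import structures.
From mathcomp Require Import all_boot all_order all_algebra.
From mathcomp Require Import ring.
Import Order.TTheory GRing.Theory Num.Theory.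
Local Open Scope ring_scope.
Set Implicit Arguments. Unset Strict Implicit. Unset Printing Implicit Defensive.

(* Proof outline.
   1. Linear algebra: a normal complex matrix is unitarily similar to a
      diagonal one; similarity preserves the characteristic polynomial and
      the rank, and for a diagonal matrix the multiplicity of the root 0 of
      the characteristic polynomial is the number of zero diagonal entries.
      Hence for a normal matrix the algebraic multiplicity of 0 equals the
      dimension of its kernel.
   2. Weighted graphs: with positive vertex weights, a function whose
      weighted Laplacian vanishes at every vertex is constant along edges
      (the Dirichlet energy, a sum of nonnegative terms, is zero).
   3. The Laplacian L(G) is Hermitian, and writing a row vector as
      x_i = z_i s_i, the left action of L(G) on x is s_j times the weighted
      Laplacian of z.  So the kernel of L(G) consists exactly of the vectors
      (z_i s_i)_i with z constant on edges, i.e. on connected components.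
   The kernel therefore always contains (s_i)_i, and it is the line spanned
   by this vector iff every indicator function of a component is constant,
   i.e. iff the underlying graph is connected. *)

Section DiagonalMultiplicity.
Variable F : fieldType.

Lemma char_poly_conj n (P A : 'M[F]_n) : P \in unitmx ->
  char_poly (invmx P *m A *m P) = char_poly A.
Proof.
move=> uP; rewrite /char_poly /char_poly_mx.
have eX : ('X%:M : 'M[{poly F}]_n) =
    map_mx polyC (invmx P) *m 'X%:M *m map_mx polyC P.
  by rewrite scalar_mxC -mulmxA -map_mxM mulVmx // map_mx1 mulmx1.
rewrite {1}eX !map_mxM -mulmxBl -mulmxBr !det_mulmx !det_map_mx.
by rewrite mulrC mulrA -rmorphM -det_mulmx mulmxV // det1 rmorph1 mul1r.
Qed.

Lemma mxrank_conj n (P A : 'M[F]_n) : P \in unitmx ->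
  \rank (invmx P *m A *m P) = \rank A.
Proof.
move=> uP; rewrite mxrankMfree ?row_free_unit //.
rewrite -mxrank_tr trmx_mul mxrankMfree ?mxrank_tr //.
by rewrite row_free_unit unitmx_tr unitmx_inv.
Qed.

Lemma mxrank_diag n (d : 'rV[F]_n) :
  \rank (diag_mx d) = (\sum_(i < n) (d ord0 i != 0%R))%N.
Proof.
elim: n d => [|n IH] d.
  by rewrite big_ord0; apply/eqP; rewrite -leqn0 rank_leq_row.
have -> : diag_mx d = block_mx (diag_mx (lsubmx (d : 'rV_(1 + n)))) 0 0
    (diag_mx (rsubmx (d : 'rV_(1 + n)))) :> 'M_(1 + n).
  by rewrite -diag_mx_row hsubmxK.
rewrite (@rank_diag_block_mx F 1 1 n n) IH big_ord_recl rank_rV.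
have head_eq0 : (diag_mx (lsubmx (d : 'rV_(1 + n))) == 0) = (d 0 ord0 == 0).
  apply/eqP/eqP => [/matrixP/(_ 0 0)|d00].
    by rewrite !mxE /= mulr1n => <-; congr (d _ _); apply: val_inj.
  apply/matrixP => i j; rewrite !ord1 !mxE mulr1n -d00.
  by congr (d _ _); apply: val_inj.
rewrite head_eq0; congr (_ + _)%N.
by apply: eq_bigr => i _; rewrite mxE; congr (d _ _ != 0); apply: val_inj.
Qed.

Lemma mup0_diag n (d : 'rV[F]_n) :
  mup 0 (char_poly (diag_mx d)) = (\sum_(i < n) (d ord0 i == 0%R))%N.
Proof.
rewrite char_poly_trig ?diag_mx_is_trig //.
have -> : \prod_(i < n) ('X - (diag_mx d i i)%:P) =
          \prod_(y <- [seq d 0 i | i <- enum 'I_n]) ('X - y%:P).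
  by rewrite big_map big_enum /=; apply: eq_bigr => i _; rewrite mxE eqxx mulr1n.
rewrite mu_prod_XsubC count_map -sum1_count big_mkcond /= big_enum_cond /=.
by apply: eq_bigr => i _; rewrite eq_sym; case: (_ == _).
Qed.

Lemma mup0_rank_diag n (d : 'rV[F]_n) :
  (mup 0 (char_poly (diag_mx d)) + \rank (diag_mx d))%N = n.
Proof.
rewrite mup0_diag mxrank_diag -big_split /=.
rewrite (eq_bigr (fun _ => 1%N)) ?sum1_card ?card_ord // => i _.
by case: (_ == _).
Qed.

End DiagonalMultiplicity.

(* For a normal matrix, the algebraic multiplicity of the eigenvalue 0 is
   the dimension of the kernel (it is unitarily diagonalizable). *)
Lemma normal_mup0_kermx (C : numClosedFieldType) n (M : 'M[C]_n) :
  M \is normalmx -> mup 0 (char_poly M) = \rank (kermx M).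
Proof.
move=> /orthomx_spectralP eM.
have mup_rank : (mup 0 (char_poly M) + \rank M)%N = n.
  by rewrite eM char_poly_conj ?mxrank_conj ?spectral_unit // mup0_rank_diag.
by rewrite mxrank_ker -{2}mup_rank addnK.
Qed.

Section HarmonicFunctions.
Variables (C : numClosedFieldType) (T : finType) (r : rel T) (a : T -> C).
Hypothesis r_sym : symmetric r.
Hypothesis a_gt0 : forall i, 0 < a i.

Lemma harmonic_edge_const (z : T -> C) :
  (forall j, \sum_(i | r i j) a i * (z j - z i) = 0) ->
  forall i j, r i j -> z i = z j.
Proof.
move=> harm.
pose U i j := if r i j then a i * a j * ((z j - z i) * (z j - z i)^*) else 0.
pose V i j := if r i j then a i * a j * ((z j)^* * (z j - z i)) else 0.
have V_sum0 : \sum_j \sum_i V i j = 0.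
  rewrite big1 // => j _.
  have -> : \sum_i V i j = a j * (z j)^* * \sum_(i | r i j) a i * (z j - z i).
    rewrite mulr_sumr [RHS]big_mkcond; apply: eq_bigr => i _; rewrite /V.
    by case: (r i j) => //; ring.
  by rewrite harm mulr0.
have energy0 : \sum_j \sum_i U i j = 0.
  have <- : \sum_j \sum_i V i j + \sum_j \sum_i V i j = \sum_j \sum_i U i j.
    rewrite {2}exchange_big -big_split; apply: eq_bigr => j _.
    rewrite -big_split; apply: eq_bigr => i _; rewrite /U /V (r_sym j i).
    case: (r i j) => /=; last by rewrite addr0.
    by rewrite rmorphB /=; ring.
  by rewrite V_sum0 addr0.
have U_ge0 i j : 0 <= U i j.
  rewrite /U; case: (r i j) => //.
  by rewrite mulr_ge0 ?mul_conjC_ge0 // mulr_ge0 ?ltW.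
have U0 i j : U i j = 0.
  have := psumr_eq0P (fun j _ => sumr_ge0 _ (fun i _ => U_ge0 i j)) energy0.
  by move/(_ j isT)/psumr_eq0P; apply=> // k _; apply: U_ge0.
move=> i j rij; have /eqP := U0 i j; rewrite /U rij.
rewrite !mulf_eq0 !(gt_eqF (a_gt0 _)) /= conjC_eq0 orbb subr_eq0.
by move/eqP.
Qed.

End HarmonicFunctions.

Section LaplacianKernel.
Variables (C : numClosedFieldType) (n : nat) (E : rel 'I_n) (w s : 'I_n -> C).
Hypothesis hw : forall i, w i != 0.
Hypothesis hs : forall i, s i ^+ 2 = w i.

Local Notation L := (laplacian E w s).

Lemma adj_sym : symmetric (adj E).
Proof. by move=> i j; rewrite /adj eq_sym orbC. Qed.

Lemma s_neq0 i : s i != 0.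
Proof. by apply: contra (hw i) => /eqP si0; rewrite -hs si0 expr0n. Qed.

Lemma norm_w i : `|w i| = s i * (s i)^*.
Proof. by rewrite -hs normrX normCK. Qed.

Lemma laplacian_normal : L \is normalmx.
Proof.
suff herm : map_mx Num.conj L^T = L by apply/normalmxP; rewrite herm.
apply/matrixP => i j; rewrite !mxE rmorphB /=; congr (_ - _).
  rewrite rmorphMn /= /degree rmorph_sum /=.
  case: (eqVneq i j) => [<-|nij]; last by rewrite !mulr0n.
  by rewrite !mulr1n; apply: eq_bigr => k _; rewrite geC0_conj.
rewrite adj_sym; case: (adj E i j); last by rewrite rmorph0.
by rewrite rmorphM /= conjCK mulrC.
Qed.

Definition sscale (z : 'I_n -> C) : 'rV[C]_n := \row_i (z i * s i).

Lemma sscale_div (x : 'rV[C]_n) : x = sscale (fun i => x 0 i / s i).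
Proof. by apply/rowP => i; rewrite mxE divfK ?s_neq0. Qed.

Lemma sscale_laplacian z j : (sscale z *m L) 0 j =
  s j * \sum_(i | adj E i j) `|w i| * (z j - z i).
Proof.
have adj_part : \sum_k sscale z 0 k * adjmx E s k j =
    \sum_(k | adj E k j) z k * s k * ((s k)^* * s j).
  rewrite [RHS]big_mkcond; apply: eq_bigr => k _; rewrite !mxE.
  by case: (adj E k j); rewrite ?mulr0.
rewrite /laplacian mulmxBr /degmx mul_mx_diag !mxE /degree adj_part.
rewrite (eq_bigl (adj E ^~ j)) => [|k]; last exact: adj_sym.
rewrite !mulr_sumr -sumrB; apply: eq_bigr => i _.
by rewrite norm_w; ring.
Qed.

Lemma sscale_kerP z :
  (sscale z <= kermx L)%MS <-> (forall i j, adj E i j -> z i = z j).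
Proof.
have wpos i : 0 < `|w i| by rewrite normr_gt0.
split=> [/sub_kermxP zK | zconst].
  apply: (harmonic_edge_const adj_sym wpos) => j.
  have /eqP := congr1 (fun x : 'rV[C]_n => x 0 j) zK.
  by rewrite sscale_laplacian mxE mulf_eq0 (negPf (s_neq0 j)) => /eqP.
apply/sub_kermxP/rowP => j; rewrite sscale_laplacian mxE big1 ?mulr0 // => i aij.
by rewrite (zconst i j aij) subrr mulr0.
Qed.

Lemma sscale_sub_s z :
  (sscale z <= sscale (fun=> 1))%MS <-> (forall i j, z i = z j).
Proof.
split=> [/sub_rVP [c zc] | zconst].
  suff zc' k : z k = c by move=> i j; rewrite !zc'.
  have /eqP := congr1 (fun x : 'rV[C]_n => x 0 k) zc.
  rewrite !mxE mul1r -subr_eq0 -mulrBl mulf_eq0 (negPf (s_neq0 k)) orbF.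
  by rewrite subr_eq0 => /eqP.
apply/sub_rVP; exists (if [pick k] is Some k0 then z k0 else 0).
apply/rowP => k; case: pickP => [k0 _ | /(_ k) //].
by rewrite !mxE mul1r (zconst k k0).
Qed.

End LaplacianKernel.

Lemma edge_const_connect (T : finType) (V : eqType) (e : rel T) (z : T -> V) :
  (forall i j, e i j -> z i = z j) -> forall i j, connect e i j -> z i = z j.
Proof.
move=> zconst i j.
have cl : closed e [pred k | z k == z i] by move=> u v /zconst; rewrite !inE => ->.
by move=> /(closed_connect cl); rewrite !inE eqxx => /esym/eqP.
Qed.

Theorem theorem2p6 (C : numClosedFieldType) (n : nat) (hn : (0 < n)%N)
  (E : rel 'I_n) (w s : 'I_n -> C)
  (hE : digraph_ok E)
  (hw : forall i, w i != 0)
  (hs : forall i, s i ^+ 2 = w i) :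
  ugraph_connected E <-> alg_mult (laplacian E w s) 0 = 1%N.
Proof.
set L := laplacian E w s; set one := sscale s (fun=> 1).
have kerP := sscale_kerP E hw hs; have lineP := sscale_sub_s hw hs.
have mult_ker : alg_mult L 0 = \rank (kermx L).
  exact/normal_mup0_kermx/laplacian_normal.
have oneK : (one <= kermx L)%MS by apply/kerP.
have rank_one : \rank one = 1%N.
  rewrite rank_rV; suff -> : one != 0 by [].
  apply/eqP => /rowP/(_ (Ordinal hn)); rewrite !mxE mul1r.
  exact/eqP/(s_neq0 hw hs).
(* Connected: every kernel vector is (z_i s_i)_i with z constant, so the
   kernel is the line of (s_i)_i.  Conversely, if the kernel is that line,
   the indicator of the component of i, scaled by s, lies on it. *)
rewrite mult_ker; split=> [conn | ker1 i j].
  apply/eqP; rewrite eqn_leq -{2}rank_one mxrankS // andbT -rank_one.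
  apply/mxrankS/row_subP => k; set zk := fun i => row k (kermx L) 0 i / s i.
  have zkK : (sscale s zk <= kermx L)%MS by rewrite -(sscale_div hw hs) row_sub.
  rewrite (sscale_div hw hs (row k (kermx L))) -/zk; apply/lineP => u v.
  exact: edge_const_connect (proj1 (kerP zk) zkK) _ _ (conn u v).
pose z k : C := (connect (adj E) i k)%:R.
have zK : (sscale s z <= kermx L)%MS.
  apply/kerP => u v uv; rewrite /z.
  by have := connect_closed (sym_connect_sym (adj_sym E)) i uv; rewrite !inE => ->.
have ker_one : (kermx L <= one)%MS.
  by rewrite -(mxrank_leqif_sup oneK).2 ker1 rank_one.
have /lineP/(_ i j) := submx_trans zK ker_one.
by rewrite /z connect0; case: (connect _ i j) => //= /eqP; rewrite oner_eq0.
Qed.
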